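(* Let $T=(V,E)$ be a temporal bipartite graph with $m=|E|$ edges, let $\tau>0$, $c>0$, let $s$ be a positive integer and let $i\in\{1,\dots,6\}$. Let $\widehat{C}_i$ be the estimator produced by \texttt{TBC-I} with parameters $s$ and $c$, as described in the context. Then $\mathbb{E}[\widehat{C}_i]=C_i$ and $\operatorname{Var}[\widehat{C}_i]\le\frac{m-1}{s}\,C_i^2$.
   Context: A temporal bipartite graph $T=(V,E)$ has node set $V=U\cup L$ with $U\cap L=\emptyset$ and a finite (multi)set $E\subseteq U\times L\times\mathbb{R}^+$ of temporal edges $(u,l,t)$ (several edges may join the same pair $u,l$ at different times); $m=|E|$. A temporal butterfly $B_i$ ($i=1,\dots,6$) is the butterfly on nodes $u'_1,u'_2$ (upper side) and $l'_1,l'_2$ (lower side) with edges $(u'_1,l'_1),(u'_2,l'_1),(u'_1,l'_2),(u'_2,l'_2)$ together with an ordering $\sigma_i$ of these four edges; $\sigma_1,\dots,\sigma_6$ are the six orderings in which $(u'_1,l'_1)$ comes first. Given $\tau>0$, a set $S$ of four temporal edges $\{(u_x,l_x,t_1),(u_y,l_x,t_2),(u_x,l_y,t_3),(u_y,l_y,t_4)\}$ of $T$ with $u_x\ne u_y\in U$, $l_x\ne l_y\in L$ is a $\tau$-instance of $B_i$ if, under the map $u_x\mapsto u'_1,u_y\mapsto u'_2,l_x\mapsto l'_1,l_y\mapsto l'_2$, the order of the four edges by timestamp matches $\sigma_i$ (so $(u_x,l_x,t_1)$ has the smallest timestamp), and $\max_{j\in\{2,3,4\}}t_j-t_1\le\tau$.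 $C_i$ denotes the number of $\tau$-instances of $B_i$ in $T$, and for $e\in E$, $C_i(e)$ denotes the number of $\tau$-instances of $B_i$ whose first (smallest-timestamp) edge is $e$. Algorithm \texttt{TBC-I}: draw $s$ edges $e'_1,\dots,e'_s$ from $E$, each uniformly at random and independently. For each drawn edge $e'=(u,l,t')$, add to the multiset $\widehat{E}$ every edge of $E$ whose timestamp lies in $[t',t'+c\tau]$ (an edge may be added several times). For $e=(u,l,t)\in E$ let $m'_e$ be the number of edges of $E$ with timestamp in $[t-c\tau,t]$. The output is $\widehat{C}_i=\sum_{e\in\widehat{E}}\frac{m}{s\,m'_e}C_i(e)$, the sum counting multiplicities in $\widehat{E}$. *)

From mathcomp Require Import all_boot all_order all_algebra all_fingroup.
Set Implicit Arguments. Unset Strict Implicit. Unset Printing Implicit Defensive.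
Import Order.TTheory GRing.Theory Num.Theory.
Local Open Scope ring_scope.

(* A temporal bipartite graph with m temporal edges is given by edge indices
   'I_m (so multisets of edges are allowed) together with
   eu : 'I_m -> U (upper endpoint), el : 'I_m -> L (lower endpoint),
   et : 'I_m -> R (timestamp).  U and L are distinct types, hence disjoint. *)

Section TBC.
Variables (R : realFieldType) (U L : eqType) (m : nat).
Variables (eu : 'I_m -> U) (el : 'I_m -> L) (et : 'I_m -> R).

(* timestamps of the edges (u2,l1), (u1,l2), (u2,l2), labelled 0,1,2 *)
Definition later_time (e2 e3 e4 : 'I_m) (j : 'I_3) : R :=
  match val j with 0%N => et e2 | 1%N => et e3 | _ => et e4 end.

(* (e1,e2,e3,e4) = ((ux,lx,t1),(uy,lx,t2),(ux,ly,t3),(uy,ly,t4)) is a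
   tau-instance of the butterfly whose edge ordering sigma is
   (u1,l1) first, followed by the edges labelled p 0, p 1, p 2. *)
Definition is_instance (p : {perm 'I_3}) (tau : R) (e1 e2 e3 e4 : 'I_m) : bool :=
  [&& eu e1 == eu e3, eu e2 == eu e4, el e1 == el e2, el e3 == el e4,
      eu e1 != eu e2, el e1 != el e3,
      [forall j : 'I_3, et e1 < later_time e2 e3 e4 j],
      [forall j : 'I_3, forall k : 'I_3,
          (j < k)%N ==> (later_time e2 e3 e4 (p j) < later_time e2 e3 e4 (p k))] &
      [forall j : 'I_3, later_time e2 e3 e4 j - et e1 <= tau]].

Definition Ccount (p : {perm 'I_3}) (tau : R) : nat :=
  #|[set x : 'I_m * 'I_m * 'I_m * 'I_m |
      is_instance p tau x.1.1.1 x.1.1.2 x.1.2 x.2]|.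

Definition Ccount_e (p : {perm 'I_3}) (tau : R) (e : 'I_m) : nat :=
  #|[set x : 'I_m * 'I_m * 'I_m | is_instance p tau e x.1.1 x.1.2 x.2]|.

Definition mprime (c tau : R) (e : 'I_m) : nat :=
  #|[set f : 'I_m | (et e - c * tau <= et f) && (et f <= et e)]|.

Definition TBC_I (p : {perm 'I_3}) (tau c : R) (s : nat)
    (w : {ffun 'I_s -> 'I_m}) : R :=
  \sum_(k < s) \sum_(e : 'I_m | (et (w k) <= et e) && (et e <= et (w k) + c * tau))
      (m%:R / (s%:R * (mprime c tau e)%:R)) * (Ccount_e p tau e)%:R.

End TBC.

Definition uexpect (R : realFieldType) (Omega : finType) (X : Omega -> R) : R :=
  (\sum_(w : Omega) X w) / #|Omega|%:R.

Definition uvar (R : realFieldType) (Omega : finType) (X : Omega -> R) : R :=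
  uexpect (fun w => (X w - uexpect X) ^+ 2).

(* Sampling with replacement makes the s draws a uniform w : {ffun 'I_s -> 'I_m},
   and TBC-I outputs X(w) = sum_k Y(w k), where Y(f) sums the weights
   m C_i(e) / (s m'_e) over the edges e whose timestamp lies in [t_f, t_f + c tau].
   Every edge e lies in the window of exactly m'_e edges f, so sum_f Y(f) = m C_i / s
   and E[X] = s E[Y] = C_i.  The draws are independent, so Var[X] = s Var[Y], and
   0 <= Y <= m C_i / s gives Var[Y] <= (m C_i / s) E[Y] - E[Y]^2 = (m - 1) C_i^2 / s^2. *)

From mathcomp Require Import all_boot all_order all_algebra all_fingroup.
From mathcomp Require Import ring.
Set Implicit Arguments. Unset Strict Implicit. Unset Printing Implicit Defensive.
Import Order.TTheory GRing.Theory Num.Theory.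
Local Open Scope ring_scope.

Section UniformExpectation.
Variables (R : realFieldType) (T : finType).
Implicit Types (X Y : T -> R) (a : R).

Lemma eq_uexpect X Y : X =1 Y -> uexpect X = uexpect Y.
Proof. by move=> XY; rewrite /uexpect (eq_bigr _ (fun w _ => XY w)). Qed.

Lemma uexpectD X Y : uexpect (fun w => X w + Y w) = uexpect X + uexpect Y.
Proof. by rewrite /uexpect big_split mulrDl. Qed.

Lemma uexpectZ a X : uexpect (fun w => a * X w) = a * uexpect X.
Proof. by rewrite /uexpect -mulr_sumr mulrA. Qed.

Lemma uexpect_sum (I : finType) (F : I -> T -> R) :
  uexpect (fun w => \sum_i F i w) = \sum_i uexpect (F i).
Proof. by rewrite /uexpect exchange_big mulr_suml. Qed.

Lemma ler_uexpect X Y : (forall w, X w <= Y w) -> uexpect X <= uexpect Y.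
Proof. by move=> XY; rewrite /uexpect ler_wpM2r ?invr_ge0 // ler_sum. Qed.

Lemma uexpect_card0 X : #|T| = 0%N -> uexpect X = 0.
Proof. by move=> T0; rewrite /uexpect T0 invr0 mulr0. Qed.

Hypothesis T_gt0 : (0 < #|T|)%N.

Lemma uexpect_cst a : uexpect (fun _ : T => a) = a.
Proof. by rewrite /uexpect sumr_const -[_ *+ _]mulr_natr mulfK // pnatr_eq0 -lt0n. Qed.

Lemma uvarE X : uvar X = uexpect (fun w => X w ^+ 2) - uexpect X ^+ 2.
Proof.
set mu := uexpect X.
rewrite /uvar (@eq_uexpect _ (fun w => X w ^+ 2 + (- (2 * mu) * X w + mu ^+ 2))).
  by rewrite !uexpectD uexpectZ uexpect_cst -/mu; ring.
by move=> w /=; rewrite -/mu; ring.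
Qed.

Lemma uvar_le M X : (forall w, 0 <= X w <= M) ->
  uvar X <= M * uexpect X - uexpect X ^+ 2.
Proof.
move=> X_bd; rewrite uvarE lerD2r -uexpectZ; apply: ler_uexpect => w.
by have /andP [X_ge0 X_le] := X_bd w; rewrite expr2 ler_wpM2r.
Qed.

End UniformExpectation.

Section IIDSample.
Variables (R : realFieldType) (I J : finType).

Lemma uexpect_prod_ffun (F : I -> J -> R) :
  uexpect (fun w : {ffun I -> J} => \prod_i F i (w i)) = \prod_i uexpect (F i).
Proof.
by rewrite /uexpect -bigA_distr_bigA prodf_div prodr_const card_ffun natrX.
Qed.

Hypothesis J_gt0 : (0 < #|J|)%N.

Lemma uexpect_ffun_eval (i : I) (G : J -> R) :
  uexpect (fun w : {ffun I -> J} => G (w i)) = uexpect G.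
Proof.
pose F k := if k == i then G else fun _ => 1.
rewrite (@eq_uexpect _ _ _ (fun w : {ffun I -> J} => \prod_k F k (w k))) => [|w].
  rewrite uexpect_prod_ffun (bigD1 i) //= big1 ?mulr1 /F ?eqxx // => k /negbTE ->.
  exact: uexpect_cst.
by rewrite (bigD1 i) //= big1 ?mulr1 /F ?eqxx // => k /negbTE ->.
Qed.

Lemma uexpect_ffun_eval2 (i i' : I) (G H : J -> R) : i != i' ->
  uexpect (fun w : {ffun I -> J} => G (w i) * H (w i')) = uexpect G * uexpect H.
Proof.
move=> ii'; pose F k := if k == i then G else if k == i' then H else fun _ => 1.
have F_i : F i = G by rewrite /F eqxx.
have F_i' : F i' = H by rewrite /F eq_sym (negbTE ii') eqxx.
have F_other k : (k != i) && (k != i') -> F k = fun _ => 1.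
  by case/andP=> /negbTE ki /negbTE ki'; rewrite /F ki ki'.
have prodF (E : I -> R) : (forall k, (k != i) && (k != i') -> E k = 1) ->
    \prod_k E k = E i * E i'.
  by move=> E1; rewrite (bigD1 i) //= (bigD1 i') 1?eq_sym //= big1 ?mulr1.
rewrite (@eq_uexpect _ _ _ (fun w : {ffun I -> J} => \prod_k F k (w k))) => [|w].
  rewrite uexpect_prod_ffun prodF /= ?F_i ?F_i' // => k /F_other ->.
  exact: uexpect_cst.
by rewrite prodF /= ?F_i ?F_i' // => k /F_other ->.
Qed.

Lemma uexpect_sum_iid (Y : J -> R) :
  uexpect (fun w : {ffun I -> J} => \sum_i Y (w i)) = #|I|%:R * uexpect Y.
Proof.
rewrite (uexpect_sum (fun i (w : {ffun I -> J}) => Y (w i))).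
by rewrite (eq_bigr _ (fun i _ => uexpect_ffun_eval i Y)) sumr_const mulr_natl.
Qed.

Lemma uvar_sum_iid (Y : J -> R) :
  uvar (fun w : {ffun I -> J} => \sum_i Y (w i)) = #|I|%:R * uvar Y.
Proof.
pose Z j := Y j - uexpect Y.
have EZ : uexpect Z = 0 by rewrite /Z uexpectD uexpect_cst ?subrr.
rewrite /uvar uexpect_sum_iid.
pose Z2 (w : {ffun I -> J}) := \sum_i \sum_k Z (w i) * Z (w k).
rewrite (@eq_uexpect _ _ _ Z2) => [|w]; last first.
  have -> : \sum_i Y (w i) - #|I|%:R * uexpect Y = \sum_i Z (w i).
    by rewrite sumrB sumr_const mulr_natl.
  by rewrite expr2 big_distrlr.
rewrite (uexpect_sum (fun i (w : {ffun I -> J}) => \sum_k Z (w i) * Z (w k))).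
rewrite mulr_natl -sumr_const; apply: eq_bigr => i _.
rewrite (uexpect_sum (fun k (w : {ffun I -> J}) => Z (w i) * Z (w k))).
rewrite (bigD1 i) //= big1 ?addr0 => [|k ki]; last first.
  by rewrite uexpect_ffun_eval2 1?eq_sym // EZ mul0r.
by rewrite (uexpect_ffun_eval i (fun j => Z j * Z j)); apply: eq_uexpect => j; rewrite expr2.
Qed.

End IIDSample.

Lemma card_set_sum (T : finType) (P : pred T) : #|[set x | P x]| = (\sum_x P x)%N.
Proof. by rewrite -sum1_card big_mkcond; apply: eq_bigr => x _; rewrite inE; case: (P x). Qed.

Lemma sum_pair_nat (A B : finType) (f : A * B -> nat) :
  (\sum_x f x = \sum_a \sum_b f (a, b))%N.
Proof. by rewrite pair_bigA; apply: eq_bigr => [[a b]]. Qed.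

Section TBCEstimator.
Variables (R : realFieldType) (U L : eqType) (m : nat).
Variables (eu : 'I_m -> U) (el : 'I_m -> L) (et : 'I_m -> R).
Variables (p : {perm 'I_3}) (tau c : R) (s : nat).

Local Notation C := (Ccount eu el et p tau).
Local Notation C_e := (Ccount_e eu el et p tau).
Local Notation m' := (mprime et c tau).

Lemma sum_Ccount_e : (\sum_e C_e e)%N = C.
Proof.
rewrite /Ccount /Ccount_e card_set_sum; under eq_bigr do rewrite card_set_sum.
by rewrite !sum_pair_nat; under eq_bigr do rewrite !sum_pair_nat.
Qed.

Definition in_window (f e : 'I_m) : bool := (et f <= et e) && (et e <= et f + c * tau).

Definition tbc_weight (e : 'I_m) : R := m%:R / (s%:R * (m' e)%:R) * (C_e e)%:R.

Definition tbc_draw (f : 'I_m) : R := \sum_(e | in_window f e) tbc_weight e.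

Lemma TBC_IE : TBC_I eu el et p tau c (s := s) = fun w => \sum_k tbc_draw (w k).
Proof. by []. Qed.

Lemma mprimeE e : m' e = #|[pred f | in_window f e]|.
Proof. by apply: eq_card => f; rewrite !inE lerBlDr andbC. Qed.

Hypothesis ctau_ge0 : 0 <= c * tau.

Lemma mprime_gt0 e : (0 < m' e)%N.
Proof. by rewrite mprimeE; apply/card_gt0P; exists e; rewrite inE /in_window lexx lerDl. Qed.

Lemma sum_tbc_draw : \sum_f tbc_draw f = m%:R / s%:R * C%:R.
Proof.
rewrite (exchange_big_dep xpredT) //= -sum_Ccount_e natr_sum mulr_sumr.
apply: eq_bigr => e _; rewrite sumr_const -mprimeE -[_ *+ _]mulr_natr /tbc_weight.
have m'_neq0 : (m' e)%:R != 0 :> R by rewrite pnatr_eq0 -lt0n mprime_gt0.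
by rewrite invfM mulrA mulrAC divfK.
Qed.

Lemma tbc_weight_ge0 e : 0 <= tbc_weight e.
Proof. by rewrite mulr_ge0 // divr_ge0 // mulr_ge0. Qed.

Lemma tbc_weight_le e : tbc_weight e <= m%:R / s%:R * (C_e e)%:R.
Proof.
rewrite /tbc_weight invfM mulrA ler_wpM2r // ler_pdivrMr ?ltr0n ?mprime_gt0 //.
by rewrite ler_peMr ?divr_ge0 // ler1n mprime_gt0.
Qed.

Lemma tbc_draw_bounds f : 0 <= tbc_draw f <= m%:R / s%:R * C%:R.
Proof.
rewrite sumr_ge0 => [|e _]; last exact: tbc_weight_ge0.
apply: (@le_trans _ _ (\sum_e tbc_weight e)).
  rewrite [leRHS](bigID (in_window f)) /= lerDl.
  by apply: sumr_ge0 => e _; exact: tbc_weight_ge0.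
rewrite -sum_Ccount_e natr_sum mulr_sumr; apply: ler_sum => e _.
exact: tbc_weight_le.
Qed.

End TBCEstimator.

Theorem theorem4p2 (R : realFieldType) (U L : eqType) (m : nat)
    (eu : 'I_m -> U) (el : 'I_m -> L) (et : 'I_m -> R)
    (Het : forall e, 0 < et e)
    (tau c : R) (Htau : 0 < tau) (Hc : 0 < c)
    (s : nat) (Hs : (0 < s)%N) (p : {perm 'I_3}) :
  uexpect (TBC_I eu el et p tau c (s := s)) = (Ccount eu el et p tau)%:R /\
  uvar (TBC_I eu el et p tau c (s := s))
    <= (m%:R - 1) / s%:R * (Ccount eu el et p tau)%:R ^+ 2.
Proof.
have ctau_ge0 : 0 <= c * tau by rewrite mulr_ge0 // ltW.
have [m0 | m_gt0] := posnP m.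
  subst m.
  have Omega0 : #|{ffun 'I_s -> 'I_0}| = 0%N by rewrite card_ffun !card_ord exp0n.
  have C0 : Ccount eu el et p tau = 0%N by rewrite -sum_Ccount_e big_ord0.
  by rewrite /uvar !uexpect_card0 // C0 expr0n mulr0.
have I_m_gt0 : (0 < #|'I_m|)%N by rewrite card_ord.
have s_neq0 : s%:R != 0 :> R by rewrite pnatr_eq0 -lt0n.
have m_neq0 : m%:R != 0 :> R by rewrite pnatr_eq0 -lt0n.
have E_draw : uexpect (tbc_draw eu el et p tau c s) = (Ccount eu el et p tau)%:R / s%:R.
  by rewrite /uexpect sum_tbc_draw // card_ord; field; rewrite s_neq0 m_neq0.
rewrite TBC_IE uexpect_sum_iid // uvar_sum_iid // card_ord E_draw; split.
  by rewrite mulrC divfK.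
have var_draw := uvar_le I_m_gt0 (tbc_draw_bounds eu el et p s ctau_ge0).
apply: le_trans (ler_wpM2l (ler0n _ _) var_draw) _.
by rewrite E_draw le_eqVlt; apply/predU1P; left; field.
Qed.
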